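(* Let $\tilde{\bm{w}}_1,\dots,\tilde{\bm{w}}_n\in\mathbb{R}^d$ and let $k\ge1$ be an integer. Suppose there exists a $k$-dimensional subspace $\bm{V}^*\subseteq\mathbb{R}^d$ with $d(\tilde{\bm{w}}_i,\bm{V}^* )\le\epsilon_{acc}$ for all $i\in[n]$. Let $(\bm{X}^*,t^* )$ be an optimal solution of the semidefinite program $\min_{\bm{X},t}\ t$ subject to $\tilde{\bm{w}}_i^\top\bm{X}\tilde{\bm{w}}_i\le t$ for $1\le i\le n$, $0\preceq\bm{X}\preceq I$, $\mathrm{Tr}(\bm{X})=d-k$, and let $\bm{X}^*=\sum_{i=1}^d\lambda_i\bm{u}_i\bm{u}_i^\top$ be an eigendecomposition with orthonormal $\bm{u}_i$ and $0\le\lambda_1\le\cdots\le\lambda_d\le1$. Then for any constant $c>1$ such that $ck$ is an integer with $ck\le d$, the $(ck-1)$-dimensional subspace $\bm{V}'=\mathrm{span}(\bm{u}_1,\dots,\bm{u}_{ck-1})$ satisfies $d(\tilde{\bm{w}}_i,\bm{V}')\le\sqrt{1+\frac{1}{c-1}}\,\epsilon_{acc}$ for all $i\in[n]$. In particular, for $c=2$, $\bm{V}'=\mathrm{span}(\bm{u}_1,\dots,\bm{u}_{2k-1})$ is a $(2k-1)$-dimensional subspace with $d(\tilde{\bm{w}}_i,\bm{V}')\le\sqrt{2}\,\epsilon_{acc}$ for all $i\in[n]$.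
   Context: For a vector $\bm{u}$ and subspace $\bm{F}$, $d(\bm{u},\bm{F})=\min_{\bm{v}\in\bm{F}}\|\bm{u}-\bm{v}\|_2$ is the orthogonal distance. $\preceq$ is the Loewner order on symmetric matrices. *)

From HB Require Import structures.
From mathcomp Require Import all_boot all_order all_algebra.
From mathcomp Require Import classical_sets reals.
Set Implicit Arguments. Unset Strict Implicit. Unset Printing Implicit Defensive.
Import Order.TTheory GRing.Theory Num.Theory.
Local Open Scope ring_scope.

(* Vectors of R^d are row vectors 'rV[R]_d; a subspace of R^d is the row
   space of a matrix F : 'M[R]_(m, d) (membership: (v <= F)%MS). *)

Definition norm2 {R : realType} {d : nat} (u : 'rV[R]_d) : R :=
  Num.sqrt (\sum_(j < d) u 0 j ^+ 2).

(* Orthogonal distance d(u, F) = min_{v in F} ||u - v||_2 (written as an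
   infimum; the minimum is attained). *)
Definition dist_sub {R : realType} {d m : nat} (u : 'rV[R]_d) (F : 'M[R]_(m, d)) : R :=
  inf [set r : R | exists v : 'rV[R]_d, (v <= F)%MS /\ r = norm2 (u - v)]%classic.

Definition psd {R : realType} {d : nat} (A : 'M[R]_d) : Prop :=
  A^T = A /\ forall v : 'rV[R]_d, 0 <= (v *m A *m v^T) 0 0.

Definition loewner_le {R : realType} {d : nat} (A B : 'M[R]_d) : Prop :=
  psd (B - A).

Definition sdp_feasible {R : realType} {n d : nat} (k : nat)
  (w : 'I_n -> 'rV[R]_d) (X : 'M[R]_d) (t : R) : Prop :=
  (forall i, ((w i) *m X *m (w i)^T) 0 0 <= t) /\
  loewner_le 0 X /\ loewner_le X 1%:M /\ \tr X = (d - k)%:R.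

Definition sdp_optimal {R : realType} {n d : nat} (k : nat)
  (w : 'I_n -> 'rV[R]_d) (X : 'M[R]_d) (t : R) : Prop :=
  sdp_feasible k w X t /\
  forall (X' : 'M[R]_d) (t' : R), sdp_feasible k w X' t' -> t <= t'.

(* The orthogonal projector onto the complement of V* is feasible for the SDP
   with value eps^2, hence t* <= eps^2.  As Tr X* = d - k and every eigenvalue
   is at most 1, the ck smallest eigenvalues sum to at least ck - k, and since
   they are sorted, lambda_(ck) >= 1 - 1/c.  The component of w_i orthogonal to
   V' lives on u_(ck), ..., u_d, where X* weighs it by at least 1 - 1/c; as
   w_i^T X* w_i <= t* <= eps^2, its squared length is at most eps^2 c/(c - 1). *)

From HB Require Import structures.
From mathcomp Require Import all_boot all_order all_algebra.
From mathcomp Require Import classical_sets reals.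
From mathcomp Require Import ring lra.
Import Order.TTheory GRing.Theory Num.Theory.
Set Implicit Arguments. Unset Strict Implicit. Unset Printing Implicit Defensive.
Local Open Scope ring_scope.

Section Gram.
Variable R : realFieldType.

Lemma mulmx_trmx_diag m n (A : 'M[R]_(m, n)) i : (A *m A^T) i i = \sum_j A i j ^+ 2.
Proof. by rewrite mxE; apply: eq_bigr => j _; rewrite mxE expr2. Qed.

Lemma mulmx_trmx_diag_ge0 m n (A : 'M[R]_(m, n)) i : 0 <= (A *m A^T) i i.
Proof. by rewrite mulmx_trmx_diag sumr_ge0 // => j _; apply: sqr_ge0. Qed.

Lemma mulmx_trmx_eq0 m n (A : 'M[R]_(m, n)) : A *m A^T = 0 -> A = 0.
Proof.
move=> AAt0; apply/matrixP => i j; rewrite mxE.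
have /eqP := congr1 (fun M : 'M[R]_m => M i i) AAt0.
rewrite mulmx_trmx_diag mxE psumr_eq0 => [/allP/(_ j (mem_index_enum _))|l _].
  by rewrite implyTb sqrf_eq0 => /eqP.
exact: sqr_ge0.
Qed.

Lemma row_free_gram_unitmx m n (B : 'M[R]_(m, n)) : row_free B -> B *m B^T \in unitmx.
Proof.
move=> freeB; rewrite -row_free_unit -kermx_eq0; apply/eqP.
have KB0 : (kermx (B *m B^T) *m B) *m (kermx (B *m B^T) *m B)^T = 0.
  by rewrite trmx_mul mulmxA -(mulmxA _ B) mulmx_ker mul0mx.
by apply: (row_free_inj freeB); rewrite /= (mulmx_trmx_eq0 KB0) mul0mx.
Qed.

End Gram.

Section OrthogonalProjector.
Variables (R : realFieldType) (r d : nat) (B : 'M[R]_(r, d)).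
Hypothesis freeB : row_free B.

Definition orthoproj : 'M[R]_d := B^T *m invmx (B *m B^T) *m B.

Let G_unit : B *m B^T \in unitmx := row_free_gram_unitmx freeB.

Lemma orthoproj_sym : orthoproj^T = orthoproj.
Proof. by rewrite /orthoproj !trmx_mul trmxK trmx_inv trmx_mul trmxK mulmxA. Qed.

Lemma orthoproj_idem : orthoproj *m orthoproj = orthoproj.
Proof.
rewrite /orthoproj -!mulmxA; congr (_ *m _).
by rewrite !mulmxA -(mulmxA (invmx _) B) mulVmx // mul1mx.
Qed.

Lemma mxtrace_orthoproj : \tr orthoproj = r%:R.
Proof. by rewrite /orthoproj -mulmxA mxtrace_mulC -mulmxA mulVmx // mxtrace1. Qed.

Lemma orthoproj_id n (v : 'M[R]_(n, d)) : (v <= B)%MS -> v *m orthoproj = v.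
Proof.
case/submxP=> D ->.
by rewrite /orthoproj !mulmxA -(mulmxA D) -(mulmxA D (B *m B^T)) mulmxV // mulmx1.
Qed.

End OrthogonalProjector.

Section SymmetricIdempotent.
Variables (R : realFieldType) (d : nat) (X : 'M[R]_d).
Hypotheses (X_sym : X^T = X) (X_idem : X *m X = X).

Lemma symidem_qformE n (x : 'M[R]_(n, d)) : x *m X *m x^T = (x *m X) *m (x *m X)^T.
Proof. by rewrite trmx_mul X_sym mulmxA -(mulmxA x X X) X_idem. Qed.

Lemma symidem_qform_ge0 (x : 'rV[R]_d) : 0 <= (x *m X *m x^T) 0 0.
Proof. by rewrite symidem_qformE mulmx_trmx_diag_ge0. Qed.

Lemma symidem_compl_sym : (1%:M - X)^T = 1%:M - X.
Proof. by rewrite linearB /= trmx1 X_sym. Qed.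

Lemma symidem_compl_idem : (1%:M - X) *m (1%:M - X) = 1%:M - X.
Proof. by rewrite mulmxBl mul1mx mulmxBr mulmx1 X_idem subrr subr0. Qed.

Lemma symidem_qform_le (x : 'rV[R]_d) : (x *m X *m x^T) 0 0 <= (x *m x^T) 0 0.
Proof.
have -> : x *m x^T = x *m X *m x^T + x *m (1%:M - X) *m x^T.
  by rewrite -mulmxDl -mulmxDr addrC subrK mulmx1.
rewrite [in leRHS]mxE lerDl.
have -> : x *m (1%:M - X) *m x^T = (x *m (1%:M - X)) *m (x *m (1%:M - X))^T.
  by rewrite trmx_mul symidem_compl_sym mulmxA -[in RHS](mulmxA x) symidem_compl_idem.
exact: mulmx_trmx_diag_ge0.
Qed.

End SymmetricIdempotent.

Lemma symidem_psd (R : realType) d (X : 'M[R]_d) : X^T = X -> X *m X = X -> psd X.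
Proof. by move=> X_sym X_idem; split=> // v; apply: symidem_qform_ge0. Qed.

Section SpectralForm.
Variables (R : comPzRingType) (d : nat) (lam : 'I_d -> R).

Lemma qform_spectral n (w : 'rV[R]_n) (V : 'M[R]_(d, n)) :
  (w *m (\sum_(j < d) lam j *: ((row j V)^T *m row j V)) *m w^T) 0 0 =
  \sum_j lam j * (w *m V^T) 0 j ^+ 2.
Proof.
rewrite mulmx_sumr mulmx_suml summxE; apply: eq_bigr => j _.
rewrite -scalemxAr -scalemxAl mxE; congr (_ * _).
have -> : (w *m V^T) 0 j = (w *m (row j V)^T) 0 0.
  by rewrite !mxE; apply: eq_bigr => l _; rewrite !mxE.
set a := w *m (row j V)^T.
have -> : w *m ((row j V)^T *m row j V) *m w^T = a *m a^T.
  by rewrite trmx_mul trmxK !mulmxA.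
by rewrite mxE big_ord1 [a^T _ _]mxE expr2.
Qed.

Lemma mxtrace_spectral (U : 'M[R]_d) : U *m U^T = 1%:M ->
  \tr (\sum_(j < d) lam j *: ((row j U)^T *m row j U)) = \sum_j lam j.
Proof.
move=> U_orth; rewrite raddf_sum; apply: eq_bigr => j _ /=.
rewrite mxtraceZ mxtrace_mulC /mxtrace big_ord1 -[RHS]mulr1; congr (_ * _).
have <- : (U *m U^T) j j = 1 by rewrite U_orth mxE eqxx.
by rewrite !mxE; apply: eq_bigr => l _; rewrite !mxE.
Qed.

End SpectralForm.

Lemma orthogonal_gram (R : comPzRingType) m d (U : 'M[R]_d) (a : 'M[R]_(m, d)) :
  U *m U^T = 1%:M -> (a *m U) *m (a *m U)^T = a *m a^T.
Proof. by move=> U_orth; rewrite trmx_mul mulmxA -(mulmxA a U) U_orth mulmx1. Qed.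

Lemma sum_ord_if_ltn (V : nmodType) n m (a b : V) : (m <= n)%N ->
  \sum_(j < n) (if (j < m)%N then a else b) = a *+ m + b *+ (n - m).
Proof.
move=> le_mn; rewrite -(big_mkord xpredT (fun j => if (j < m)%N then a else b)).
rewrite (big_cat_nat (leq0n m) le_mn) /=.
rewrite (@eq_big_nat _ _ _ 0 m _ (fun _ => a)); last by move=> j /andP[_ ->].
rewrite (@eq_big_nat _ _ _ m n _ (fun _ => b)); last by move=> j /andP[+ _]; rewrite ltnNge => ->.
by rewrite !sumr_const_nat subn0.
Qed.

Section MonotoneWeights.
Variables (R : numDomainType) (d : nat) (lam : 'I_d -> R).
Hypothesis lam_mono : forall i j : 'I_d, (i <= j)%N -> lam i <= lam j.

Lemma sum_le_monotone (p : 'I_d) : (forall i, lam i <= 1) ->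
  \sum_j lam j <= lam p *+ p.+1 + (d - p.+1)%:R.
Proof.
move=> lam_le1; rewrite -sum_ord_if_ltn //; apply: ler_sum => j _.
by case: ifP => [le_jp|_]; [apply: lam_mono; rewrite -ltnS | apply: lam_le1].
Qed.

Lemma tail_weighted_sum_le (a : 'I_d -> R) (p : 'I_d) :
  (forall j, 0 <= lam j) -> (forall j, 0 <= a j) ->
  lam p * \sum_(j : 'I_d | (p <= j)%N) a j <= \sum_j lam j * a j.
Proof.
move=> lam_ge0 a_ge0; rewrite mulr_sumr [in leRHS](bigID (fun j : 'I_d => (p <= j)%N)) /=.
apply: ler_wpDr; first by apply: sumr_ge0 => j _; apply: mulr_ge0.
by apply: ler_sum => j le_pj; apply: ler_wpM2r; [apply: a_ge0 | apply: lam_mono].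
Qed.

End MonotoneWeights.

Lemma monotone_sum_threshold_ge (R : realDomainType) d k (lam : 'I_d -> R) (p : 'I_d) (c : R) :
  (forall i j : 'I_d, (i <= j)%N -> lam i <= lam j) -> (forall i, lam i <= 1) ->
  (0 < k <= d)%N -> \sum_j lam j = (d - k)%:R -> c * k%:R = p.+1%:R ->
  c - 1 <= c * lam p.
Proof.
move=> lam_mono lam_le1 /andP[k_gt0 le_kd] sum_lam c_k.
have := sum_le_monotone lam_mono p lam_le1.
rewrite sum_lam !natrB // -mulr_natr -c_k.
have : 0 < k%:R :> R by rewrite ltr0n.
nra.
Qed.

Lemma mulmx_pidE (R : pzSemiRingType) m n p (A : 'M[R]_(m, n)) i j :
  (A *m pid_mx p) i j = if (j < p)%N then A i j else 0.
Proof.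
rewrite mxE (bigD1 j) //= big1 => [|l /negbTE ne_lj]; last first.
  by rewrite mxE (inj_eq val_inj) ne_lj mulr0.
by rewrite mxE eqxx addr0; case: (j < p)%N; rewrite ?mulr1 ?mulr0.
Qed.

Lemma pid_mulmxE (R : comPzSemiRingType) m n p (A : 'M[R]_(m, n)) i j :
  (pid_mx p *m A) i j = if (i < p)%N then A i j else 0.
Proof. by rewrite -[_ *m A]trmxK trmx_mul tr_pid_mx mxE mulmx_pidE mxE. Qed.

Lemma row_prefix_mxE (R : comPzSemiRingType) d p (U : 'M[R]_d) :
  \matrix_(i < d) (if (i < p)%N then row i U else 0) = pid_mx p *m U.
Proof. by apply/matrixP => i j; rewrite pid_mulmxE !mxE; case: (i < p)%N; rewrite ?mxE. Qed.

Section Distance.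
Variables (R : realType) (d : nat).
Implicit Types (u v : 'rV[R]_d).

Lemma norm2E u : norm2 u = Num.sqrt ((u *m u^T) 0 0).
Proof. by rewrite mulmx_trmx_diag. Qed.

Lemma dist_sub_le m (F : 'M[R]_(m, d)) u v : (v <= F)%MS -> dist_sub u F <= norm2 (u - v).
Proof.
move=> vF; apply: ge_inf; last by exists v.
by exists 0 => _ [? [_ ->]]; apply: sqrtr_ge0.
Qed.

Lemma le_dist_sub m (F : 'M[R]_(m, d)) u r :
  (forall v, (v <= F)%MS -> r <= norm2 (u - v)) -> r <= dist_sub u F.
Proof.
move=> le_r; apply: lb_le_inf; first by exists (norm2 (u - 0)), 0; rewrite sub0mx.
by move=> _ [v [vF ->]]; apply: le_r.
Qed.

Lemma dist_sub_ge0 m (F : 'M[R]_(m, d)) u : 0 <= dist_sub u F.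
Proof. by apply: le_dist_sub => v _; apply: sqrtr_ge0. Qed.

Lemma orthocompl_qform_le_dist m (F : 'M[R]_(m, d)) u :
  Num.sqrt ((u *m (1%:M - orthoproj (row_base F)) *m u^T) 0 0) <= dist_sub u F.
Proof.
set P := 1%:M - _; have freeB := row_base_free F.
have P_sym : P^T = P by rewrite symidem_compl_sym ?orthoproj_sym.
have P_idem : P *m P = P by rewrite symidem_compl_idem ?orthoproj_sym ?orthoproj_idem.
apply: le_dist_sub => v vF; rewrite norm2E ler_wsqrtr //.
have vP0 : v *m P = 0.
  by rewrite mulmxBr mulmx1 orthoproj_id ?subrr ?eq_row_base.
rewrite (symidem_qformE P_sym P_idem u) -[u *m P](subr0) -vP0 -mulmxBl.
by rewrite -symidem_qformE // symidem_qform_le.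
Qed.

Lemma dist_sub_pid_mul (U : 'M[R]_d) (p : nat) u : U *m U^T = 1%:M ->
  dist_sub u ((pid_mx p : 'M_d) *m U) <=
    Num.sqrt (\sum_(j : 'I_d | (p <= j)%N) (u *m U^T) 0 j ^+ 2).
Proof.
move=> U_orth; set y := u *m U^T.
have u_eq : u = y *m U by rewrite -mulmxA (mulmx1C U_orth) mulmx1.
clearbody y.
apply: le_trans (dist_sub_le u (submxMl y _)) _.
rewrite {1}u_eq mulmxA -mulmxBl norm2E orthogonal_gram // mulmx_trmx_diag.
rewrite [in leRHS]big_mkcond ler_wsqrtr // le_eqVlt; apply/predU1l/eq_bigr => j _.
rewrite mxE mxE mulmx_pidE ltnNge.
by case: (p <= j)%N; rewrite ?subrr ?expr0n ?subr0.
Qed.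

End Distance.

Lemma sdp_optimal_le_sqr (R : realType) n d k m (w : 'I_n -> 'rV[R]_d)
    (Vs : 'M[R]_(m, d)) (eps : R) (Xs : 'M[R]_d) (ts : R) :
  \rank Vs = k -> (forall i, dist_sub (w i) Vs <= eps) ->
  sdp_optimal k w Xs ts -> ts <= eps ^+ 2.
Proof.
move=> rkV distV [_ ts_min]; have freeB := row_base_free Vs.
have P_sym := orthoproj_sym (row_base Vs); have P_idem := orthoproj_idem freeB.
set P := orthoproj _ in P_sym P_idem.
have Q_sym := symidem_compl_sym P_sym; have Q_idem := symidem_compl_idem P_idem.
apply: ts_min (1%:M - P) _ _; split; [|split; [|split]].
- move=> i; have q_ge0 := symidem_qform_ge0 Q_sym Q_idem (w i).
  have le_eps := le_trans (orthocompl_qform_le_dist Vs (w i)) (distV i).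
  rewrite -(sqr_sqrtr q_ge0) lerXn2r ?nnegrE ?sqrtr_ge0 //.
  exact: le_trans (sqrtr_ge0 _) le_eps.
- by rewrite /loewner_le subr0; apply: symidem_psd.
- by rewrite /loewner_le opprB addrC subrK; apply: symidem_psd.
- by rewrite raddfB /= mxtrace1 mxtrace_orthoproj // -rkV natrB ?rank_leq_col.
Qed.

Lemma ler_sqrt_mul_sqr (R : rcfType) (a e x : R) :
  0 <= a -> 0 <= e -> x <= a * e ^+ 2 -> Num.sqrt x <= Num.sqrt a * e.
Proof.
move=> a_ge0 e_ge0 le_x.
by rewrite -(ger0_norm e_ge0) -sqrtr_sqr -sqrtrM // ler_wsqrtr.
Qed.

Lemma sqrt_tail_le (R : rcfType) (c l x e : R) : 1 < c -> 0 <= x -> 0 <= e ->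
  c - 1 <= c * l -> l * x <= e ^+ 2 -> Num.sqrt x <= Num.sqrt (1 + 1 / (c - 1)) * e.
Proof.
move=> c_gt1 x_ge0 e_ge0 cl lx; have c1_gt0 : 0 < c - 1 by rewrite subr_gt0.
apply: ler_sqrt_mul_sqr => //; first by rewrite addr_ge0 // divr_ge0 // ltW.
have -> : 1 + 1 / (c - 1) = (c - 1)^-1 * c by field; rewrite gt_eqF.
by rewrite -mulrA ler_pdivlMl //; nra.
Qed.

Theorem theorem5 (R : realType) (n d k : nat) (w : 'I_n -> 'rV[R]_d)
  (eps_acc : R)
  (hk : (1 <= k)%N)
  (hV : exists Vs : 'M[R]_d, \rank Vs = k /\
          forall i : 'I_n, dist_sub (w i) Vs <= eps_acc)
  (Xs : 'M[R]_d) (ts : R)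
  (hopt : sdp_optimal k w Xs ts)
  (U : 'M[R]_d) (lam : 'I_d -> R)
  (hU : U *m U^T = 1%:M)
  (hX : Xs = \sum_(i < d) lam i *: ((row i U)^T *m row i U))
  (hlam0 : forall i, 0 <= lam i)
  (hlam1 : forall i, lam i <= 1)
  (hmono : forall i j : 'I_d, (i <= j)%N -> lam i <= lam j)
  (c : R) (m : nat)
  (hc : 1 < c) (hm : c * k%:R = m%:R) (hmd : (m <= d)%N) :
  let V' : 'M[R]_d := \matrix_(i < d) (if (i < m.-1)%N then row i U else (0 : 'rV[R]_d)) in
  \rank V' = m.-1 /\
  forall i : 'I_n, dist_sub (w i) V' <= Num.sqrt (1 + 1 / (c - 1)) * eps_acc.
Proof.
have [Vs [rkV distV]] := hV; have ts_le := sdp_optimal_le_sqr rkV distV hopt.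
case: hopt => [[qform_le [_ [_ trX]]] _].
have k_gt0 : 0 < k%:R :> R by rewrite ltr0n.
have lt_km : (k < m)%N by rewrite -(ltr_nat R) -hm; nra.
have m_gt0 : (0 < m)%N := leq_ltn_trans (leq0n k) lt_km.
have lt_pd : (m.-1 < d)%N by rewrite prednK.
(* Indices start at 0, so [lam p] is the paper's lambda_(ck). *)
set p := Ordinal lt_pd.
have cL : c - 1 <= c * lam p.
  apply: (monotone_sum_threshold_ge (k := k)) => //.
  - by rewrite hk (leq_trans (ltnW lt_km)).
  - by rewrite -(mxtrace_spectral lam hU) -hX.
  - by rewrite /= prednK.
rewrite /= row_prefix_mxE; split.
  have [U_unit _] := mulmx1_unit hU.
  by rewrite mxrankMfree ?row_free_unit // rank_pid_mx // ltnW.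
move=> i; apply: le_trans (dist_sub_pid_mul p (w i) hU) _.
set T := \sum_(j | _) _.
have eps_ge0 : 0 <= eps_acc := le_trans (dist_sub_ge0 _ _) (distV i).
have LT : lam p * T <= eps_acc ^+ 2.
  apply: le_trans ts_le; apply: le_trans (qform_le i); rewrite hX qform_spectral.
  by apply: tail_weighted_sum_le => // j; apply: sqr_ge0.
apply: sqrt_tail_le cL LT => //.
by apply: sumr_ge0 => j _; apply: sqr_ge0.
Qed.
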